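(* Let $A$ and $B$ be automata. (1) If $(b,n)$ is a normed backward simulation from $A$ to $B$, then $b$ is a branching backward simulation from $A$ to $B$. (2) If $b$ is a branching backward simulation from $A$ to $B$, define $n:(\mathrm{steps}(A)\cup\mathrm{start}(A))\times\mathrm{states}(B)\to\mathbb{N}$ as follows: for $s\in\mathrm{start}(A)$, $n(s,u)=0$ if $u\notin b[s]$ and otherwise $n(s,u)$ is the minimal length (number of steps) of an execution of $B$ that ends in $u$ and is $b$-related to the one-state execution $s$ of $A$; for a step $t\xrightarrow{a}_A s$, $n(t\xrightarrow{a}s,u)=0$ if $u\notin b[s]$ and otherwise $n(t\xrightarrow{a}s,u)$ is the minimal length of an execution fragment of $B$ that ends in $u$ and is $b$-related to the execution fragment $t\,a\,s$ of $A$. Then $(b,n)$ is a normed backward simulation from $A$ to $B$ (with $\mathbb{N}$ ordered by $<$).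
   Context: An automaton $A$ consists of a set $\mathrm{states}(A)$ of states, a nonempty set $\mathrm{start}(A)\subseteq\mathrm{states}(A)$ of start states, a set $\mathrm{acts}(A)$ of actions containing a distinguished internal action $\tau$, and a set $\mathrm{steps}(A)\subseteq\mathrm{states}(A)\times\mathrm{acts}(A)\times\mathrm{states}(A)$ of steps; write $s\xrightarrow{a}_A t$ for $(s,a,t)\in\mathrm{steps}(A)$. An execution fragment of $A$ is a finite or infinite alternating sequence $s_0a_1s_1a_2s_2\cdots$ of states and actions, beginning with a state and, if finite, ending with a state, such that $s_{i-1}\xrightarrow{a_i}_A s_i$ for all $i>0$; its index set $\mathrm{Index}(\alpha)$ is the set of indices $i$ of its states $s_i$. An execution is an execution fragment whose first state is a start state. For a relation $R$ write $R[s]=\{u\mid (s,u)\in R\}$. Execution correspondence: Let $R\subseteq\mathrm{states}(A)\times\mathrm{states}(B)$ and let $\alpha=s_0a_1s_1\cdots$ and $\alpha'=u_0b_1u_1\cdots$ be execution fragments of $A$ and $B$. An index relation over $R$ between $\alpha$ and $\alpha'$ is a relation $I\subseteq\mathrm{Index}(\alpha)\times\mathrm{Index}(\alpha')$ such that (1) $(i,j)\in I$ implies $(s_i,u_j)\in R$; (2) $(i,j)\in I$, $(i',j')\in I$ and $i<i'$ imply $j\le j'$; (3) every index of $\alpha$ is related by $I$ to some index of $\alpha'$ and every index of $\alpha'$ is related by $I$ to some index of $\alpha$; (4) if $(i,j),(i+1,j+1)\in I$ then $a_{i+1}=b_{j+1}$; if $(i,j),(i+1,j)\in I$ then $a_{i+1}=\tau$;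 if $(i,j),(i,j+1)\in I$ then $b_{j+1}=\tau$. The fragments $\alpha,\alpha'$ are $R$-related, written $(\alpha,\alpha')\in R$, if such an $I$ exists. A normed backward simulation from $A$ to $B$ is a pair $(b,n)$ where $b\subseteq\mathrm{states}(A)\times\mathrm{states}(B)$ is total (every $s\in\mathrm{states}(A)$ has $b[s]\neq\emptyset$) and $n:(\mathrm{steps}(A)\cup\mathrm{start}(A))\times\mathrm{states}(B)\to S$ for some set $S$ with a well-founded strict order $<$, such that: (1) if $s\in\mathrm{start}(A)$ and $u\in b[s]$ then (a) $u\in\mathrm{start}(B)$, or (b) there is $v\in b[s]$ with $v\xrightarrow{\tau}_B u$ and $n(s,v)<n(s,u)$; (2) if $t\xrightarrow{a}_A s$ and $u\in b[s]$ then (a) $u\in b[t]$ and $a=\tau$, or (b) there is $v\in b[t]$ with $v\xrightarrow{a}_B u$, or (c) there is $v\in b[s]$ with $v\xrightarrow{\tau}_B u$ and $n(t\xrightarrow{a}s,v)<n(t\xrightarrow{a}s,u)$. A branching backward simulation from $A$ to $B$ is a total relation $b\subseteq\mathrm{states}(A)\times\mathrm{states}(B)$ such that (1) if $s\in\mathrm{start}(A)$ and $u\in b[s]$ then $B$ has an execution that ends in $u$ and is $b$-related to the one-state execution $s$ of $A$; (2) if $t\xrightarrow{a}_A s$ and $u\in b[s]$ then $B$ has an execution fragment that ends in $u$ and is $b$-related to the execution fragment $t\,a\,s$ of $A$. *)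

From Stdlib Require Import List Arith Classical ClassicalEpsilon.
Import ListNotations.
Set Implicit Arguments.

Record automaton (Act : Type) (tau : Act) := Automaton {
  state : Type;
  start : state -> Prop;
  acts : Act -> Prop;
  step : state -> Act -> state -> Prop;
  start_nonempty : exists s, start s;
  tau_in_acts : acts tau;
  step_acts : forall s a t, step s a t -> acts a }.

Arguments state {Act tau} _.
Arguments start {Act tau} _ _.
Arguments acts {Act tau} _ _.
Arguments step {Act tau} _ _ _ _.

(* A finite alternating sequence s0 a1 s1 ... ak sk, stored as its first state
   and the list of pairs (a_i, s_i), i = 1..k. *)
Record frag (St Act : Type) := Frag { ffirst : St; ftrans : list (Act * St) }.
Arguments Frag {St Act} _ _.
Arguments ffirst {St Act} _.
Arguments ftrans {St Act} _.

Definition flen {St Act} (f : frag St Act) : nat := length (ftrans f).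
Definition fstates {St Act} (f : frag St Act) : list St :=
  ffirst f :: map snd (ftrans f).
(* state s_i (meaningful for i <= flen f) *)
Definition fstate {St Act} (f : frag St Act) (i : nat) : St :=
  nth i (fstates f) (ffirst f).
(* action a_{i+1} (meaningful for i < flen f); default is irrelevant *)
Definition fact {St Act} (dflt : Act) (f : frag St Act) (i : nat) : Act :=
  nth i (map fst (ftrans f)) dflt.
Definition flast {St Act} (f : frag St Act) : St := last (fstates f) (ffirst f).

Definition frag1 {St Act} (s : St) : frag St Act := Frag s [].
Definition frag2 {St Act} (t : St) (a : Act) (s : St) : frag St Act :=
  Frag t [(a, s)].

Unset Implicit Arguments.
Section Exec.
Context {Act : Type} {tau : Act}.

Definition is_frag (A : automaton tau) (f : frag (state A) Act) : Prop :=
  forall i, i < flen f -> step A (fstate f i) (fact tau f i) (fstate f (S i)).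

Definition is_exec (A : automaton tau) (f : frag (state A) Act) : Prop :=
  is_frag A f /\ start A (ffirst f).

Definition index_relation (A B : automaton tau) (R : state A -> state B -> Prop)
  (al : frag (state A) Act) (al' : frag (state B) Act) (I : nat -> nat -> Prop) : Prop :=
  (forall i j, I i j -> i <= flen al /\ j <= flen al') /\
  (forall i j, I i j -> R (fstate al i) (fstate al' j)) /\
  (forall i j i' j', I i j -> I i' j' -> i < i' -> j <= j') /\
  (forall i, i <= flen al -> exists j, I i j) /\
  (forall j, j <= flen al' -> exists i, I i j) /\
  (forall i j, I i j -> I (S i) (S j) -> fact tau al i = fact tau al' j) /\
  (forall i j, I i j -> I (S i) j -> fact tau al i = tau) /\
  (forall i j, I i j -> I i (S j) -> fact tau al' j = tau).

Definition R_related (A B : automaton tau) (R : state A -> state B -> Prop)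
  (al : frag (state A) Act) (al' : frag (state B) Act) : Prop :=
  exists I, index_relation A B R al al' I.

(* domain (steps(A) ∪ start(A)): a start state, or a step (t,a,s) *)
Definition step_or_start (A : automaton tau) : Type :=
  (state A + (state A * Act * state A))%type.

Definition total_rel (A B : automaton tau) (b : state A -> state B -> Prop) : Prop :=
  forall s, exists u, b s u.

Definition wf_strict_order (S : Type) (lt : S -> S -> Prop) : Prop :=
  well_founded lt /\ (forall x, ~ lt x x) /\
  (forall x y z, lt x y -> lt y z -> lt x z).

Definition normed_backward_simulation (A B : automaton tau)
  (b : state A -> state B -> Prop) (S : Type) (lt : S -> S -> Prop)
  (n : step_or_start A -> state B -> S) : Prop :=
  total_rel A B b /\
  (forall s u, start A s -> b s u ->
     start B u \/
     exists v, b s v /\ step B v tau u /\ lt (n (inl s) v) (n (inl s) u)) /\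
  (forall t a s u, step A t a s -> b s u ->
     (b t u /\ a = tau) \/
     (exists v, b t v /\ step B v a u) \/
     (exists v, b s v /\ step B v tau u /\
        lt (n (inr (t, a, s)) v) (n (inr (t, a, s)) u))).

Definition branching_backward_simulation (A B : automaton tau)
  (b : state A -> state B -> Prop) : Prop :=
  total_rel A B b /\
  (forall s u, start A s -> b s u ->
     exists be, is_exec B be /\ flast be = u /\ R_related A B b (frag1 s) be) /\
  (forall t a s u, step A t a s -> b s u ->
     exists be, is_frag B be /\ flast be = u /\ R_related A B b (frag2 t a s) be).

(* minimal natural number satisfying P (arbitrary if none) *)
Definition min_nat (P : nat -> Prop) : nat :=
  epsilon (inhabits 0) (fun k => P k /\ forall m, P m -> k <= m).

Definition branching_norm (A B : automaton tau) (b : state A -> state B -> Prop)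
  (x : step_or_start A) (u : state B) : nat :=
  match x with
  | inl s =>
      if excluded_middle_informative (b s u) then
        min_nat (fun k => exists be, is_exec B be /\ flast be = u /\
                   R_related A B b (frag1 s) be /\ flen be = k)
      else 0
  | inr (t, a, s) =>
      if excluded_middle_informative (b s u) then
        min_nat (fun k => exists be, is_frag B be /\ flast be = u /\
                   R_related A B b (frag2 t a s) be /\ flen be = k)
      else 0
  end.

End Exec.

(* (1) By well-founded induction on [n(x, u)]: in cases (a) and (b) of the
   normed simulation a fragment of length 0 or 1 is related to [s] or [t a s];
   in case (c) the fragment obtained for [v] is extended by the tau-step to
   [u], which stutters against the last state of A's fragment.
   (2) Take a shortest related fragment of B ending in [u].  Either it is
   trivial (u is a start state, resp. case (a)), or its last step is matched
   with the step [t a s] (case (b)), or it is a tau-step stuttering against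
   [s]; then its prefix is a strictly shorter related fragment ending in a
   [v] with [b s v], so the norm decreases (case (c)). *)
From Pilot Require Import Defs.
From Stdlib Require Import List Arith Lia Classical ClassicalEpsilon Inverse_Image.
Import ListNotations.

Definition snoc {St Ac} (f : frag St Ac) (c : Ac) (u : St) : frag St Ac :=
  Frag (ffirst f) (ftrans f ++ [(c, u)]).

Section Fragments.
Context {St Ac : Type}.
Implicit Types (f : frag St Ac).

Lemma flen_snoc f c u : flen (snoc f c u) = S (flen f).
Proof. unfold flen, snoc; simpl. rewrite length_app; simpl; lia. Qed.

Lemma fstate_snoc f c u j : j <= flen f -> fstate (snoc f c u) j = fstate f j.
Proof.
  intros Hj. unfold fstate, fstates, snoc; cbn [ffirst ftrans].
  rewrite map_app, app_comm_cons. apply app_nth1.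
  simpl. rewrite length_map. unfold flen in Hj. lia.
Qed.

Lemma fstate_snoc_last f c u : fstate (snoc f c u) (S (flen f)) = u.
Proof.
  unfold fstate, fstates, snoc, flen; cbn [ffirst ftrans].
  rewrite map_app, app_comm_cons, app_nth2; simpl; rewrite length_map; [|lia].
  now rewrite Nat.sub_diag.
Qed.

Lemma fact_snoc (d : Ac) f c u j : j < flen f -> Defs.fact d (snoc f c u) j = Defs.fact d f j.
Proof.
  intros Hj. unfold Defs.fact, snoc; cbn [ffirst ftrans].
  rewrite map_app. apply app_nth1. now rewrite length_map.
Qed.

Lemma fact_snoc_last (d : Ac) f c u : Defs.fact d (snoc f c u) (flen f) = c.
Proof.
  unfold Defs.fact, snoc, flen; cbn [ffirst ftrans].
  rewrite map_app, app_nth2; rewrite length_map; [|lia].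
  now rewrite Nat.sub_diag.
Qed.

Lemma flast_snoc f c u : flast (snoc f c u) = u.
Proof.
  unfold flast, fstates, snoc; cbn [ffirst ftrans].
  rewrite map_app, app_comm_cons. apply last_last.
Qed.

Lemma frag_nil_or_snoc f : ftrans f = [] \/ exists f' c u, f = snoc f' c u.
Proof.
  destruct f as [x tr]. destruct tr as [|[c u] tr] using rev_ind; [now left|].
  right. now exists (Frag x tr), c, u.
Qed.

Lemma flast_nil f : ftrans f = [] -> flast f = ffirst f.
Proof. intros H. unfold flast, fstates. now rewrite H. Qed.

Lemma flast_fstate f : flast f = fstate f (flen f).
Proof.
  destruct (frag_nil_or_snoc f) as [H|[f' [c [u ->]]]].
  - unfold flast, fstate, fstates, flen. now rewrite H.
  - now rewrite flast_snoc, flen_snoc, fstate_snoc_last.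
Qed.

End Fragments.

Lemma min_nat_spec (P : nat -> Prop) :
  (exists k, P k) -> P (min_nat P) /\ forall m, P m -> min_nat P <= m.
Proof.
  intros [k Hk]. apply (epsilon_spec (inhabits 0) (fun k => P k /\ forall m, P m -> k <= m)).
  induction k as [k IH] using lt_wf_ind.
  destruct (classic (exists m, P m /\ m < k)) as [[m [Hm Hlt]]|Hnone].
  - exact (IH m Hlt Hm).
  - exists k. split; [exact Hk|]. intros m Hm.
    destruct (le_lt_dec k m); [assumption|]. exfalso; eauto.
Qed.

Section Relations.
Context {Act : Type} {tau : Act} (A B : automaton tau).
Implicit Types (R : state A -> state B -> Prop)
  (al : frag (state A) Act) (be : frag (state B) Act).

Lemma is_frag_frag1 (u : state B) : is_frag B (frag1 u).
Proof. intros i Hi. unfold flen in Hi; cbn in Hi; lia. Qed.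

Lemma is_frag_frag2 (v : state B) a u : step B v a u -> is_frag B (frag2 v a u).
Proof. intros H i Hi. unfold flen in Hi; cbn in Hi. now replace i with 0 by lia. Qed.

Lemma is_frag_snoc be c u :
  is_frag B be -> step B (flast be) c u -> is_frag B (snoc be c u).
Proof.
  intros Hbe Hstep i Hi. rewrite flen_snoc in Hi.
  destruct (Nat.eq_dec i (flen be)) as [->|Hne].
  - rewrite fact_snoc_last, fstate_snoc_last, fstate_snoc, <- flast_fstate by lia.
    exact Hstep.
  - rewrite fact_snoc, !fstate_snoc by lia. apply Hbe. lia.
Qed.

Lemma is_frag_snocE be c u :
  is_frag B (snoc be c u) -> is_frag B be /\ step B (flast be) c u.
Proof.
  intros Hbe. split.
  - intros i Hi. specialize (Hbe i). rewrite flen_snoc in Hbe.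
    rewrite fact_snoc, !fstate_snoc in Hbe by lia. apply Hbe. lia.
  - specialize (Hbe (flen be)).
    rewrite flen_snoc, fact_snoc_last, fstate_snoc_last, fstate_snoc in Hbe by lia.
    rewrite flast_fstate. apply Hbe. lia.
Qed.

Lemma index_relation_last R al be I :
  index_relation A B R al be I -> I (flen al) (flen be).
Proof.
  intros [Hbnd [_ [Hmono [HcovA [HcovB _]]]]].
  destruct (HcovB (flen be) (le_n _)) as [i Hi]. pose proof (Hbnd _ _ Hi).
  destruct (Nat.eq_dec i (flen al)) as [<-|]; [exact Hi|].
  destruct (HcovA (flen al) (le_n _)) as [j Hj]. pose proof (Hbnd _ _ Hj).
  assert (flen be <= j) by (apply (Hmono _ _ _ _ Hi Hj); lia).
  now replace (flen be) with j by lia.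
Qed.

Lemma R_related_flast R al be : R_related A B R al be -> R (flast al) (flast be).
Proof.
  intros [I HI]. rewrite !flast_fstate.
  apply (proj1 (proj2 HI)), (index_relation_last _ _ _ _ HI).
Qed.

Lemma R_related_snoc_tau R al be u :
  R_related A B R al be -> R (flast al) u -> R_related A B R al (snoc be tau u).
Proof.
  intros [I HI] Hu. pose proof (index_relation_last _ _ _ _ HI) as Hlast.
  destruct HI as [Hbnd [HR [Hmono [HcovA [HcovB [Hsync [HstutA HstutB]]]]]]].
  rewrite flast_fstate in Hu.
  exists (fun i j => I i j \/ (i = flen al /\ j = S (flen be))).
  split; [|split; [|split; [|split; [|split; [|split; [|split]]]]]].
  - intros i j [H|[-> ->]]; rewrite flen_snoc; [apply Hbnd in H|]; lia.
  - intros i j [H|[-> ->]].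
    + pose proof (Hbnd _ _ H). rewrite fstate_snoc by lia. auto.
    + now rewrite fstate_snoc_last.
  - intros i j i' j' [H|[-> ->]] [H'|[-> ->]] Hlt;
      [eauto|apply Hbnd in H|apply Hbnd in H'|]; lia.
  - intros i Hi. destruct (HcovA i Hi) as [j Hj]; eauto.
  - intros j Hj. rewrite flen_snoc in Hj.
    destruct (Nat.eq_dec j (S (flen be))) as [->|Hne].
    + exists (flen al); now right.
    + destruct (HcovB j ltac:(lia)) as [i Hi]; eauto.
  - intros i j [H|[-> ->]] [H'|[Hi Hj]];
      [|injection Hj as ->|apply Hbnd in H'; lia|lia].
    + pose proof (Hbnd _ _ H'). rewrite fact_snoc by lia. eauto.
    + rewrite fact_snoc_last. apply (HstutA i (flen be)); [|rewrite Hi]; assumption.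
  - intros i j [H|[-> ->]] [H'|[Hi Hj]];
      [eauto|apply Hbnd in H|apply Hbnd in H'|]; lia.
  - intros i j [H|[-> ->]] [H'|[Hi Hj]];
      [|injection Hj as ->|apply Hbnd in H'; lia|lia].
    + pose proof (Hbnd _ _ H'). rewrite fact_snoc by lia. eauto.
    + apply fact_snoc_last.
Qed.

Lemma index_relation_snocE_tau R al be c u I :
  index_relation A B R al (snoc be c u) I -> I (flen al) (flen be) ->
  c = tau /\ R_related A B R al be.
Proof.
  intros HI Hprev. pose proof (index_relation_last _ _ _ _ HI) as Hlast.
  rewrite flen_snoc in Hlast.
  destruct HI as [Hbnd [HR [Hmono [HcovA [HcovB [Hsync [HstutA HstutB]]]]]]].
  split; [rewrite <- (fact_snoc_last tau be c u); eauto|].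
  exists (fun i j => I i j /\ j <= flen be).
  split; [|split; [|split; [|split; [|split; [|split; [|split]]]]]].
  - intros i j [H Hj]; apply Hbnd in H; lia.
  - intros i j [H Hj]. rewrite <- (fstate_snoc be c u) by lia. auto.
  - intros i j i' j' [H _] [H' _]; eauto.
  - intros i Hi. destruct (HcovA i Hi) as [j Hj]. pose proof (Hbnd _ _ Hj).
    rewrite flen_snoc in H.
    destruct (Nat.eq_dec i (flen al)) as [->|Hne]; [now exists (flen be)|].
    exists j. split; [exact Hj|].
    destruct (Nat.eq_dec j (S (flen be))) as [->|]; [|lia].
    assert (S (flen be) <= flen be) by (apply (Hmono _ _ _ _ Hj Hprev); lia). lia.
  - intros j Hj. destruct (HcovB j ltac:(rewrite flen_snoc; lia)) as [i Hi].
    now exists i.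
  - intros i j [H _] [H' Hj']. rewrite <- (fact_snoc tau be c u) by lia. eauto.
  - intros i j [H _] [H' _]; eauto.
  - intros i j [H _] [H' Hj']. rewrite <- (fact_snoc tau be c u) by lia. eauto.
Qed.

Lemma R_related_frag1 R s u : R s u -> R_related A B R (frag1 s) (frag1 u).
Proof.
  intros H. exists (fun i j => i = 0 /\ j = 0).
  split; [|split; [|split; [|split; [|split; [|split; [|split]]]]]];
    unfold flen; cbn.
  - intros i j [-> ->]; lia.
  - now intros i j [-> ->].
  - intros i j i' j' [-> ->] [-> ->]; lia.
  - intros i Hi; exists 0; lia.
  - intros j Hj; exists 0; lia.
  - intros i j _ [Hi _]; discriminate.
  - intros i j _ [Hi _]; discriminate.
  - intros i j _ [_ Hj]; discriminate.
Qed.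

Lemma R_related_frag2_stutter R t s u :
  R t u -> R s u -> R_related A B R (frag2 t tau s) (frag1 u).
Proof.
  intros Ht Hs. exists (fun i j => i <= 1 /\ j = 0).
  split; [|split; [|split; [|split; [|split; [|split; [|split]]]]]];
    unfold flen; cbn.
  - intros i j [? ->]; lia.
  - intros i j [Hi ->]. destruct i as [|[|i]]; cbn; auto; lia.
  - intros i j i' j' [_ ->] [_ ->]; lia.
  - intros i Hi; exists 0; lia.
  - intros j Hj; exists 0; lia.
  - intros i j [_ ->] [_ Hj]; discriminate.
  - intros i j [_ ->] [Hi _]. now replace i with 0 by lia.
  - intros i j [_ ->] [_ Hj]; discriminate.
Qed.

Lemma R_related_frag2 R t a s v u :
  R t v -> R s u -> R_related A B R (frag2 t a s) (frag2 v a u).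
Proof.
  intros Ht Hs. exists (fun i j => i = j /\ i <= 1).
  split; [|split; [|split; [|split; [|split; [|split; [|split]]]]]];
    unfold flen; cbn.
  - intros i j [-> ?]; lia.
  - intros i j [-> ?]. destruct j as [|[|j]]; cbn; auto; lia.
  - intros i j i' j' [-> _] [-> _]; lia.
  - intros i Hi; exists i; lia.
  - intros j Hj; exists j; lia.
  - intros i j [-> _] [_ Hi]. now replace j with 0 by lia.
  - intros i j [-> _] [Hi _]; lia.
  - intros i j [-> _] [Hi _]; lia.
Qed.

Lemma R_related_frag1_snocE R s be c u :
  R_related A B R (frag1 s) (snoc be c u) -> c = tau /\ R_related A B R (frag1 s) be.
Proof.
  intros [I HI]. apply (index_relation_snocE_tau _ _ _ _ _ I HI).
  destruct HI as [Hbnd [_ [_ [_ [HcovB _]]]]].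
  destruct (HcovB (flen be)) as [i Hi]; [rewrite flen_snoc; lia|].
  pose proof (Hbnd _ _ Hi) as [Hi0 _]. unfold flen in Hi0 at 1; cbn in Hi0.
  now replace i with 0 in Hi by lia.
Qed.

Lemma R_related_frag2_snocE R t a s be c u :
  R_related A B R (frag2 t a s) (snoc be c u) ->
  (c = tau /\ R_related A B R (frag2 t a s) be) \/ (c = a /\ R t (flast be)).
Proof.
  intros [I HI]. pose proof (index_relation_last _ _ _ _ HI) as Hlast.
  rewrite flen_snoc in Hlast.
  destruct (classic (I 1 (flen be))) as [Hprev|Hprev].
  - left. exact (index_relation_snocE_tau _ _ _ _ _ I HI Hprev).
  - right. destruct HI as [Hbnd [HR [_ [_ [HcovB [Hsync _]]]]]].
    destruct (HcovB (flen be)) as [i Hi]; [rewrite flen_snoc; lia|].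
    pose proof (Hbnd _ _ Hi) as [Hi1 _]. unfold flen in Hi1 at 1; cbn in Hi1.
    destruct (Nat.eq_dec i 1) as [->|]; [contradiction|].
    replace i with 0 in Hi by lia. split.
    + rewrite <- (fact_snoc_last tau be c u). symmetry. exact (Hsync _ _ Hi Hlast).
    + rewrite flast_fstate. rewrite <- (fstate_snoc be c u) by lia. exact (HR _ _ Hi).
Qed.

Lemma R_related_frag2_nilE R t a s be :
  ftrans be = [] -> R_related A B R (frag2 t a s) be -> a = tau /\ R t (flast be).
Proof.
  intros Hnil [I HI].
  assert (Hlen : flen be = 0) by (unfold flen; now rewrite Hnil).
  destruct HI as [Hbnd [HR [_ [HcovA [_ [_ [HstutA _]]]]]]].
  assert (Hrow : forall i, i <= 1 -> I i 0).
  { intros i Hi. destruct (HcovA i) as [j Hj]; [unfold flen; cbn; lia|].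
    pose proof (Hbnd _ _ Hj). now replace j with 0 in Hj by lia. }
  split.
  - exact (HstutA _ _ (Hrow 0 ltac:(lia)) (Hrow 1 ltac:(lia))).
  - rewrite flast_fstate, Hlen. exact (HR _ _ (Hrow 0 ltac:(lia))).
Qed.

End Relations.

Section NormedToBranching.
Context {Act : Type} {tau : Act} (A B : automaton tau).

Lemma normed_start_related (S : Type) (lt : S -> S -> Prop) b n s :
  well_founded lt -> normed_backward_simulation A B b S lt n -> start A s ->
  forall u, b s u ->
  exists be, is_exec B be /\ flast be = u /\ R_related A B b (frag1 s) be.
Proof.
  intros Hwf [_ [Hstart _]] Hs u.
  induction u as [u IH] using (well_founded_ind (wf_inverse_image _ _ lt (n (inl s)) Hwf)).
  intros Hbu. destruct (Hstart s u Hs Hbu) as [Hu | [v [Hbv [Hvu Hlt]]]].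
  - exists (frag1 u). repeat split; [apply is_frag_frag1|exact Hu|].
    now apply R_related_frag1.
  - destruct (IH v Hlt Hbv) as [be [[Hbe Hfirst] [<- Hrel]]].
    exists (snoc be tau u). repeat split.
    + now apply is_frag_snoc.
    + exact Hfirst.
    + apply flast_snoc.
    + now apply R_related_snoc_tau.
Qed.

Lemma normed_step_related (S : Type) (lt : S -> S -> Prop) b n t a s :
  well_founded lt -> normed_backward_simulation A B b S lt n -> step A t a s ->
  forall u, b s u ->
  exists be, is_frag B be /\ flast be = u /\ R_related A B b (frag2 t a s) be.
Proof.
  intros Hwf [_ [_ Hstep]] Hts u.
  induction u as [u IH]
    using (well_founded_ind (wf_inverse_image _ _ lt (n (inr (t, a, s))) Hwf)).
  intros Hbu.
  destruct (Hstep t a s u Hts Hbu)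
    as [[Hbt ->] | [[v [Hbv Hvu]] | [v [Hbv [Hvu Hlt]]]]].
  - exists (frag1 u). repeat split; [apply is_frag_frag1|].
    now apply R_related_frag2_stutter.
  - exists (frag2 v a u). repeat split; [now apply is_frag_frag2|].
    now apply R_related_frag2.
  - destruct (IH v Hlt Hbv) as [be [Hbe [<- Hrel]]].
    exists (snoc be tau u). repeat split.
    + now apply is_frag_snoc.
    + apply flast_snoc.
    + now apply R_related_snoc_tau.
Qed.

Lemma normed_branching (S : Type) (lt : S -> S -> Prop) b n :
  wf_strict_order S lt -> normed_backward_simulation A B b S lt n ->
  branching_backward_simulation A B b.
Proof.
  intros [Hwf _] Hnorm. split; [exact (proj1 Hnorm)|split].
  - intros s u Hs. exact (normed_start_related S lt b n s Hwf Hnorm Hs u).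
  - intros t a s u Hts. exact (normed_step_related S lt b n t a s Hwf Hnorm Hts u).
Qed.

End NormedToBranching.

Section BranchingToNormed.
Context {Act : Type} {tau : Act} (A B : automaton tau).
Variable b : state A -> state B -> Prop.

Lemma branching_norm_start_le s u be :
  b s u -> is_exec B be -> flast be = u -> R_related A B b (frag1 s) be ->
  branching_norm A B b (inl s) u <= flen be.
Proof.
  intros Hbu Hbe Hlast Hrel. unfold branching_norm.
  destruct (excluded_middle_informative (b s u)) as [_|]; [|contradiction].
  apply min_nat_spec; eauto 10.
Qed.

Lemma branching_norm_start_attained s u :
  b s u -> (exists be, is_exec B be /\ flast be = u /\ R_related A B b (frag1 s) be) ->
  exists be, is_exec B be /\ flast be = u /\ R_related A B b (frag1 s) be /\
    flen be = branching_norm A B b (inl s) u.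
Proof.
  intros Hbu [be [Hbe [Hlast Hrel]]]. unfold branching_norm.
  destruct (excluded_middle_informative (b s u)) as [_|]; [|contradiction].
  apply min_nat_spec; eauto 10.
Qed.

Lemma branching_norm_step_le t a s u be :
  b s u -> is_frag B be -> flast be = u -> R_related A B b (frag2 t a s) be ->
  branching_norm A B b (inr (t, a, s)) u <= flen be.
Proof.
  intros Hbu Hbe Hlast Hrel. unfold branching_norm.
  destruct (excluded_middle_informative (b s u)) as [_|]; [|contradiction].
  apply min_nat_spec; eauto 10.
Qed.

Lemma branching_norm_step_attained t a s u :
  b s u -> (exists be, is_frag B be /\ flast be = u /\ R_related A B b (frag2 t a s) be) ->
  exists be, is_frag B be /\ flast be = u /\ R_related A B b (frag2 t a s) be /\
    flen be = branching_norm A B b (inr (t, a, s)) u.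
Proof.
  intros Hbu [be [Hbe [Hlast Hrel]]]. unfold branching_norm.
  destruct (excluded_middle_informative (b s u)) as [_|]; [|contradiction].
  apply min_nat_spec; eauto 10.
Qed.

Hypothesis Hbranch : branching_backward_simulation A B b.

Lemma branching_normed_start s u : start A s -> b s u ->
  start B u \/ exists v, b s v /\ step B v tau u /\
    branching_norm A B b (inl s) v < branching_norm A B b (inl s) u.
Proof.
  intros Hs Hbu. destruct Hbranch as [_ [Hstart _]].
  destruct (branching_norm_start_attained s u Hbu (Hstart s u Hs Hbu))
    as [be [[Hbe Hfirst] [Hlast [Hrel Hlen]]]].
  destruct (frag_nil_or_snoc be) as [Hnil | [f [c [w ->]]]].
  - left. rewrite flast_nil in Hlast by exact Hnil. now rewrite <- Hlast.
  - right. rewrite flast_snoc in Hlast. subst w.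
    destruct (R_related_frag1_snocE A B b s f c u Hrel) as [-> Hrelf].
    apply is_frag_snocE in Hbe as [Hf Hstep].
    pose proof (R_related_flast A B b _ _ Hrelf) as Hbv.
    exists (flast f). repeat split; [exact Hbv|exact Hstep|].
    pose proof (branching_norm_start_le s (flast f) f Hbv (conj Hf Hfirst) eq_refl Hrelf).
    rewrite <- Hlen, flen_snoc. lia.
Qed.

Lemma branching_normed_step t a s u : step A t a s -> b s u ->
  (b t u /\ a = tau) \/ (exists v, b t v /\ step B v a u) \/
  (exists v, b s v /\ step B v tau u /\
     branching_norm A B b (inr (t, a, s)) v < branching_norm A B b (inr (t, a, s)) u).
Proof.
  intros Hts Hbu. destruct Hbranch as [_ [_ Hstep]].
  destruct (branching_norm_step_attained t a s u Hbu (Hstep t a s u Hts Hbu))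
    as [be [Hbe [Hlast [Hrel Hlen]]]].
  destruct (frag_nil_or_snoc be) as [Hnil | [f [c [w ->]]]].
  - left. destruct (R_related_frag2_nilE A B b t a s be Hnil Hrel) as [Ha Hbt].
    now rewrite <- Hlast.
  - rewrite flast_snoc in Hlast. subst w.
    apply is_frag_snocE in Hbe as [Hf Hfu].
    destruct (R_related_frag2_snocE A B b t a s f c u Hrel)
      as [[-> Hrelf] | [-> Hbt]].
    + right; right. pose proof (R_related_flast A B b _ _ Hrelf) as Hbv.
      exists (flast f). repeat split; [exact Hbv|exact Hfu|].
      pose proof (branching_norm_step_le t a s (flast f) f Hbv Hf eq_refl Hrelf).
      rewrite <- Hlen, flen_snoc. lia.
    + right; left. now exists (flast f).
Qed.

End BranchingToNormed.

Theorem mainTheorem9 (Act : Type) (tau : Act) (A B : automaton tau) :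
  (forall (S : Type) (lt : S -> S -> Prop) (b : state A -> state B -> Prop)
          (n : step_or_start A -> state B -> S),
     wf_strict_order S lt ->
     normed_backward_simulation A B b S lt n ->
     branching_backward_simulation A B b) /\
  (forall b : state A -> state B -> Prop,
     branching_backward_simulation A B b ->
     normed_backward_simulation A B b nat Peano.lt (branching_norm A B b)).
Proof.
  split.
  - apply normed_branching.
  - intros b Hbranch. split; [exact (proj1 Hbranch)|split].
    + exact (branching_normed_start A B b Hbranch).
    + exact (branching_normed_step A B b Hbranch).
Qed.
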